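(* Let $\alpha\in(0,1)$. For $\mu\in[0,\infty]$ let $f_\mu:\mathcal X\times\mathcal Y\to\{0,1\}$ and $g_\mu:\mathcal X\to\{0,1\}$ be (measurable) indicator functions such that for every $(x,y)\in\mathcal X\times\mathcal Y$: (1) $\mu\mapsto f_\mu(x,y)$ is non-increasing on $[0,\infty)$ and $f_\mu(x,y)\le g_\mu(x)$ for all $\mu\in[0,\infty)$; (2) $\mu\mapsto f_\mu(x,y)$ and $\mu\mapsto g_\mu(x)$ are right-continuous on $[0,\infty)$; (3) $f_\infty(x,y)=g_\infty(x)=0$. Let $(X_i,Y_i)_{i=1}^{n+m}$ be i.i.d. with common distribution $P_{XY}$. Define $$\mu_\alpha=\min\left\{\mu\ge 0:\ \frac{\frac{1}{n+1}\left(\sum_{i=1}^n f_\mu(X_i,Y_i)+1\right)}{\frac1m\left(1\vee\sum_{i=1}^m g_\mu(X_{n+i})\right)}\le\alpha\right\},$$ or $\mu_\alpha=\infty$ if no such $\mu$ exists. Then $$\mathbb E\left[\frac{\sum_{i=1}^m f_{\mu_\alpha}(X_{n+i},Y_{n+i})}{1\vee\sum_{i=1}^m g_{\mu_\alpha}(X_{n+i})}\right]\le\alpha.$$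
   Context: $a\vee b=\max(a,b)$. *)

From HB Require Import structures.
From mathcomp Require Import all_boot all_order all_algebra.
From mathcomp Require Import all_classical all_reals all_analysis.
Set Implicit Arguments. Unset Strict Implicit. Unset Printing Implicit Defensive.
Import Order.TTheory GRing.Theory Num.Theory.
Import numFieldNormedType.Exports.
Local Open Scope classical_set_scope.
Local Open Scope ring_scope.

(* Z i : Omega -> X * Y, i = 0, ..., n+m-1 (0-indexed version of i = 1..n+m):
   indices 0..n-1 are the calibration sample (X_1,Y_1)..(X_n,Y_n),
   indices n..n+m-1 are the test sample (X_{n+1},Y_{n+1})..(X_{n+m},Y_{n+m}). *)

Definition mutually_independent {R : realType} {d : measure_display}
  {Omega : measurableType d} {dZ : measure_display} {Z : measurableType dZ}
  (P : probability Omega R) (N : nat) (V : nat -> Omega -> Z) : Prop :=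
  forall B : nat -> set Z, (forall i, measurable (B i)) ->
    P (\bigcap_(i in [set i | (i < N)%N]) (V i @^-1` B i)) =
    \big[*%E/1%E]_(i < N) P (V i @^-1` B i).

Definition identically_distributed {R : realType} {d : measure_display}
  {Omega : measurableType d} {dZ : measure_display} {Z : measurableType dZ}
  (P : probability Omega R) (N : nat) (V : nat -> Omega -> Z) : Prop :=
  forall i j, (i < N)%N -> (j < N)%N -> forall B : set Z, measurable B ->
    P (V i @^-1` B) = P (V j @^-1` B).

Section Conformal.
Context {R : realType} {dX dY : measure_display}
  {X : measurableType dX} {Y : measurableType dY} {Omega : Type}.
Variables (f : \bar R -> X -> Y -> bool) (g : \bar R -> X -> bool)
  (n m : nat) (Z : nat -> Omega -> X * Y).

Definition ratio_hat (w : Omega) (mu : R) : R :=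
  ((n.+1%:R)^-1 * (\sum_(i < n) (f mu%:E (Z i w).1 (Z i w).2)%:R + 1)) /
  ((m%:R)^-1 * Num.max 1 (\sum_(i < m) (g mu%:E (Z (n + i) w).1)%:R)).

(* mu_alpha: the least mu >= 0 with ratio_hat <= alpha, +oo if none exists.
   Written as the infimum in \bar R (inf of the empty set is +oo). *)
Definition mu_alpha (alpha : R) (w : Omega) : \bar R :=
  ereal_inf [set mu%:E | mu in [set mu : R | 0 <= mu /\ ratio_hat w mu <= alpha]].

Definition fdp_at (mu : \bar R) (w : Omega) : R :=
  (\sum_(i < m) (f mu (Z (n + i) w).1 (Z (n + i) w).2)%:R) /
  Num.max 1 (\sum_(i < m) (g mu (Z (n + i) w).1)%:R).

End Conformal.

(* Fix a test index j and let nu_j be the threshold computed with test point j moved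
   into the calibration set (its f counted in the numerator, its g counted as 1 in the
   denominator). This statistic is symmetric in the n calibration points and test
   point j, and it agrees with the original ratio wherever f holds at test point j.
   Hence nu_j = mu_alpha on that event, and the ratio condition at mu_alpha bounds the
   j-th term of the FDP by alpha (n+1)/m times the weight
     w_j(k) = f_{nu_j}(Z_k) / sum_{l in cal + {n+j}} f_{nu_j}(Z_l)
   of k = n+j. The n+1 weights of the points cal + {n+j} sum to at most 1, and
   swapping Z_{n+j} with a calibration point preserves both nu_j and the law of the
   i.i.d. sample, so they all have the same expectation, at most 1/(n+1). Summing over
   the m test points gives alpha. Right-continuity makes the infima attained and lets
   them be computed along rationals, which gives measurability. *)

From HB Require Import structures.
From mathcomp Require Import all_boot all_order all_algebra.
From mathcomp Require Import all_classical all_reals all_analysis.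
From mathcomp Require Import measurable_realfun perm ring.
Set Implicit Arguments. Unset Strict Implicit. Unset Printing Implicit Defensive.
Import Order.TTheory GRing.Theory Num.Theory.
Import numFieldNormedType.Exports.
Local Open Scope classical_set_scope.
Local Open Scope ring_scope.

Section right_neighbourhoods.
Context {R : realType}.

Lemma cvg_nat_near_eq (b : R -> bool) (s : R) :
  (fun u => (b u)%:R : R) @ s^'+ --> ((b s)%:R : R) ->
  \forall u \near s^'+, b u = b s.
Proof.
move/cvgrPdist_lt => /(_ 1%R ltr01); apply: filterS => u.
by case: (b u); case: (b s); rewrite //= ?subrr ?subr0 ?sub0r ?normrN normr1 ltxx.
Qed.

Lemma near_right_itv (P : R -> Prop) (s : R) :
  (\forall u \near s^'+, P u) ->
  exists2 e : R, 0 < e & forall u, s < u < s + e -> P u.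
Proof.
move=> /nbhs_ballP[e e0 He]; exists e => // u /andP[su us]; apply: He => //.
rewrite /ball /= ltr_distlC; apply/andP; split => //.
by rewrite (lt_trans _ su) // ltrBlDr ltrDl.
Qed.

Lemma near_right_rat (P : R -> Prop) (s c : R) :
  (\forall u \near s^'+, P u) -> s < c ->
  exists q : rat, s < ratr q < c /\ P (ratr q).
Proof.
move=> /near_right_itv[e e0 He] sc.
have : s < Num.min c (s + e) by rewrite lt_min sc ltrDl e0.
move=> /rat_in_itvoo[q]; rewrite in_itv /= => /andP[sq].
rewrite lt_min => /andP[qc qe].
by exists q; split; [rewrite sq qc | apply: He; rewrite sq qe].
Qed.

End right_neighbourhoods.

Section threshold.
Context {R : realType}.

Definition threshold (P : R -> bool) : \bar R :=
  ereal_inf [set mu%:E | mu in [set mu : R | 0 <= mu /\ P mu]].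

Variable P : R -> bool.

Lemma threshold_ge0 : (0 <= threshold P)%E.
Proof. by apply/ereal_infP => _ [mu [mu0 _] <-]; rewrite lee_fin. Qed.

Lemma threshold_lbound (u : R) : 0 <= u -> P u -> (threshold P <= u%:E)%E.
Proof. by move=> u0 Pu; apply: ereal_inf_lbound; exists u. Qed.

Lemma notP_lt_threshold (u : R) : 0 <= u -> (u%:E < threshold P)%E -> ~~ P u.
Proof. by move=> u0; apply: contraTN => Pu; rewrite -leNgt threshold_lbound. Qed.

Lemma threshold_least (s : R) : 0 <= s -> P s ->
  (forall u, 0 <= u -> u < s -> ~~ P u) -> threshold P = s%:E.
Proof.
move=> s0 Ps Pmin; apply/eqP; rewrite eq_le threshold_lbound //=.
apply/ereal_infP => _ [u [u0 Pu] <-]; rewrite lee_fin leNgt.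
by apply/negP => us; move: (Pmin u u0 us); rewrite Pu.
Qed.

Hypothesis P_right_const : forall s, 0 <= s -> \forall u \near s^'+, P u = P s.

Lemma threshold_attained (s : R) : threshold P = s%:E -> 0 <= s /\ P s.
Proof.
move=> Ps; have s0 : 0 <= s by rewrite -lee_fin -Ps threshold_ge0.
split => //; have [e e0 He] := near_right_itv (P_right_const s0).
have : (threshold P < (s + e)%:E)%E by rewrite Ps lte_fin ltrDl.
move=> /ereal_inf_lt[_ [u [u0 Pu] <-]]; rewrite lte_fin => use.
have su : s <= u by rewrite -lee_fin -Ps threshold_lbound.
move: su; rewrite le_eqVlt => /predU1P[-> //|su].
by rewrite -(He u) // su use.
Qed.

Lemma threshold_lt_ratP (q : R) :
  (threshold P < q%:E)%E <-> exists r : rat, [/\ 0 <= ratr r :> R, ratr r < q & P (ratr r)].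
Proof.
split; last by move=> [r [r0 rq Pr]]; rewrite (le_lt_trans (threshold_lbound r0 Pr)) ?lte_fin.
move=> /ereal_inf_lt[_ [u [u0 Pu] <-]]; rewrite lte_fin => uq.
have [r [/andP[ur rq] Pr]] := near_right_rat (P_right_const u0) uq.
by exists r; split; rewrite ?(le_trans u0) ?ltW // Pr.
Qed.

End threshold.

Section antitone_switch.
Context {R : realType} (b : \bar R -> bool).
Hypotheses (b_oo : b +oo%E = false)
  (b_antitone : forall mu mu' : R, 0 <= mu -> mu <= mu' -> b mu'%:E -> b mu%:E)
  (b_right_const : forall s : R, 0 <= s -> \forall u \near s^'+, b u%:E = b s%:E).

Lemma antitone_switch_ratP (e : \bar R) : (0 <= e)%E ->
  b e <-> exists q : rat, [/\ 0 <= ratr q :> R, (e < (ratr q)%:E)%E & b (ratr q)%:E].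
Proof.
case: e => [s||] //; last by rewrite b_oo; split => // -[q [_ + _]].
rewrite lee_fin => s0; split => [bs | [q [q0 sq bq]]]; last first.
  by apply: b_antitone bq => //; rewrite ltW // -lte_fin.
have s1 : s < s + 1 by rewrite ltrDl.
have [q [/andP[sq _] bq]] := near_right_rat (b_right_const s0) s1.
by exists q; split; rewrite ?lte_fin ?(le_trans s0) ?ltW // bq.
Qed.

End antitone_switch.

Section finitely_many_events.
Context {d : measure_display} {T : measurableType d} {I : finType} (b : I -> T -> bool).
Hypothesis mb : forall i, measurable [set t | b i t].

Lemma measurable_events_eq (v : I -> bool) : measurable [set t | forall i, b i t = v i].
Proof.
rewrite (_ : [set t | _] = \bigcap_(i in [set: I]) [set t | b i t = v i]); last first.
  by apply/seteqP; split => t /= H i => [_|]; [apply: H | apply: H].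
apply: (@fin_bigcap_measurable _ T) => [|i _]; first exact: finite_finset.
case: (v i); first by rewrite (_ : [set t | _] = [set t | b i t]) //; apply/seteqP.
rewrite (_ : [set t | _] = ~` [set t | b i t]); first exact: measurableC.
by apply/seteqP; split => t /=; case: (b i t).
Qed.

Lemma measurable_preimage_events (V : Type) (phi : T -> V) :
  (forall t t', (forall i, b i t = b i t') -> phi t = phi t') ->
  forall A : set V, measurable (phi @^-1` A).
Proof.
move=> phiE A.
(* [phi] factors through the finite type [{ffun I -> bool}]. *)
rewrite (_ : phi @^-1` A = \bigcup_(v in [set v : {ffun I -> bool} |
    exists2 t, (forall i, b i t = v i) & A (phi t)]) [set t | forall i, b i t = v i]).
  apply: (@fin_bigcup_measurable _ T) => [|v _]; first exact: finite_finset.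
  exact: measurable_events_eq.
apply/seteqP; split => t /=.
  by move=> At; exists [ffun i => b i t]; first exists t; move=> *; rewrite ?ffunE.
move=> [v [t0 Ht0 At0] Ht]; rewrite /preimage /= (phiE t t0) // => i.
by rewrite Ht Ht0.
Qed.

End finitely_many_events.

(* No measurability is needed: a nonnegative integral is a supremum over the simple
   functions below the integrand. *)
Lemma ge0_le_integral_nonmeasurable {R : realType} d (T : measurableType d)
  (mu : {measure set T -> \bar R}) (f1 f2 : T -> \bar R) :
  (forall x, (0 <= f1 x)%E) -> (forall x, (f1 x <= f2 x)%E) ->
  (\int[mu]_x f1 x <= \int[mu]_x f2 x)%E.
Proof.
move=> f10 f12; rewrite !ge0_integralTE //; last by move=> x; exact: le_trans (f12 x).
apply: le_ereal_sup => _ [h hf1 <-]; exists h => //= x; exact: le_trans (f12 x).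
Qed.

Section measurable_thresholds.
Context {R : realType} {d : measure_display} {T : measurableType d}.

Lemma measurable_threshold_lt (P : T -> R -> bool) (q : R) :
  (forall t s, 0 <= s -> \forall u \near s^'+, P t u = P t s) ->
  (forall r, 0 <= r -> measurable [set t | P t r]) ->
  measurable [set t | (threshold (P t) < q%:E)%E].
Proof.
move=> P_right_const mP.
pose F (r : rat) := if (0 <= ratr r :> R) && (ratr r < q) then [set t | P t (ratr r)] else set0.
rewrite (_ : [set t | _] = \bigcup_r F r).
  apply: countable_bigcupT_measurable => // r.
  by rewrite /F; case: ifP => // /andP[r0 _]; exact: mP.
apply/seteqP; split => t /=.
  move=> /(threshold_lt_ratP (P_right_const t))[r [r0 rq Pr]].
  by exists r; rewrite //= /F r0 rq.
move=> [r _]; rewrite /F; case: ifP => // /andP[r0 rq] Pr.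
by apply/(threshold_lt_ratP (P_right_const t)); exists r.
Qed.

Lemma measurable_antitone_switch (b : T -> \bar R -> bool) (e : T -> \bar R) :
  (forall t, b t +oo%E = false) ->
  (forall t (mu mu' : R), 0 <= mu -> mu <= mu' -> b t mu'%:E -> b t mu%:E) ->
  (forall t (s : R), 0 <= s -> \forall u \near s^'+, b t u%:E = b t s%:E) ->
  (forall t, (0 <= e t)%E) -> (forall q : R, measurable [set t | (e t < q%:E)%E]) ->
  (forall q : R, 0 <= q -> measurable [set t | b t q%:E]) ->
  measurable [set t | b t (e t)].
Proof.
move=> b_oo b_antitone b_right_const e0 me mb.
have switchP t := antitone_switch_ratP (b_oo t) (@b_antitone t) (@b_right_const t) (e0 t).
pose F (r : rat) := if 0 <= ratr r :> R then
  [set t | (e t < (ratr r)%:E)%E] `&` [set t | b t (ratr r)%:E] else set0.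
rewrite (_ : [set t | _] = \bigcup_r F r).
  apply: countable_bigcupT_measurable => // r.
  by rewrite /F; case: ifP => // r0; apply: measurableI; [exact: me | exact: mb].
apply/seteqP; split => t /=.
  by move=> /switchP[r [r0 er br]]; exists r; rewrite //= /F r0.
by move=> [r _]; rewrite /F; case: ifP => // r0 [er br]; apply/switchP; exists r.
Qed.

End measurable_thresholds.

Section tuple_cylinders.
Context {d : measure_display} {T : measurableType d} (N : nat).

Definition cylinder (B : 'I_N -> set T) : set (N.-tuple T) :=
  [set t | forall k, B k (tnth t k)].

Definition cylinders : set (set (N.-tuple T)) :=
  [set cylinder B | B in [set B : 'I_N -> set T | forall k, measurable (B k)]].

Lemma measurable_cylinder (B : 'I_N -> set T) :
  (forall k, measurable (B k)) -> measurable (cylinder B).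
Proof.
move=> mB; rewrite (_ : cylinder B =
    \bigcap_(k in [set: 'I_N]) ((fun t : N.-tuple T => tnth t k) @^-1` B k)).
  apply: (@fin_bigcap_measurable _ (N.-tuple T)) => [|k _]; first exact: finite_finset.
  by rewrite -[X in measurable X]setTI; exact: measurable_tnth.
by apply/seteqP; split => t /= H k => [_|]; apply: H.
Qed.

Lemma cylinders_setI_closed : setI_closed cylinders.
Proof.
move=> _ _ [B mB <-] [C mC <-]; exists (fun k => B k `&` C k).
  by move=> k; apply: measurableI; [exact: mB | exact: mC].
by apply/seteqP; split => t /= H; [split => k; case: (H k) | move=> k; split; apply H].
Qed.

Lemma tuple_measurable_cylinders : measurable = <<s cylinders >>.
Proof.
apply/seteqP; split; last first.
  apply: smallest_sub; first exact: sigma_algebra_measurable.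
  by move=> _ [B mB <-]; exact: measurable_cylinder.
apply: smallest_sub; first exact: smallest_sigma_algebra.
apply: (big_ind (fun U => U `<=` <<s cylinders >>)) => //.
  by move=> U V HU HV A [/HU|/HV].
move=> i _ _ [A mA <-]; apply: sub_sigma_algebra.
exists (fun k => if k == i then A else setT) => [k|]; first by case: ifP.
apply/seteqP; split => t /=.
  by move=> H; split => //; have := H i; rewrite eqxx.
by move=> [_ H] k; case: eqP => [->|].
Qed.

Definition tuple_perm (s : {perm 'I_N}) (t : N.-tuple T) : N.-tuple T :=
  [tuple tnth t (s k) | k < N].

Lemma tnth_tuple_perm (s : {perm 'I_N}) (t : N.-tuple T) : tnth (tuple_perm s t) = tnth t \o s.
Proof. by apply/funext => k; rewrite /= tnth_mktuple. Qed.

Lemma measurable_tuple_perm (s : {perm 'I_N}) : measurable_fun setT (tuple_perm s).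
Proof.
apply/measurable_fun_tnthP => k.
rewrite (_ : _ \o _ = fun t : N.-tuple T => tnth t (s k)); first exact: measurable_tnth.
by apply/funext => t; rewrite /= tnth_tuple_perm.
Qed.

HB.instance Definition _ (s : {perm 'I_N}) :=
  isMeasurableFun.Build _ _ _ _ (tuple_perm s) (measurable_tuple_perm s).

Lemma tuple_perm_cylinder (s : {perm 'I_N}) (B : 'I_N -> set T) :
  tuple_perm s @^-1` cylinder B = cylinder (B \o (s^-1)%g).
Proof.
apply/seteqP; split => t /= H k; rewrite ?tnth_tuple_perm /=.
  by have := H (s^-1%g k); rewrite tnth_tuple_perm /= permKV.
by have := H (s k); rewrite /= permK.
Qed.

End tuple_cylinders.

Section exchangeable_sample.
Context {R : realType} {d dT : measure_display} {Omega : measurableType d}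
  {T : measurableType dT} (P : probability Omega R) (N : nat) (Z : nat -> Omega -> T).
Hypotheses (mZ : forall i, (i < N)%N -> measurable_fun setT (Z i))
  (Zindep : mutually_independent P N Z) (Zident : identically_distributed P N Z).

Definition sample (w : Omega) : N.-tuple T := [tuple Z k w | k < N].

Lemma measurable_sample : measurable_fun setT sample.
Proof.
apply/measurable_fun_tnthP => k.
rewrite (_ : _ \o _ = Z k); first exact: mZ.
by apply/funext => w; rewrite /= tnth_mktuple.
Qed.

HB.instance Definition _ := isMeasurableFun.Build _ _ _ _ sample measurable_sample.

Lemma sample_cylinder (B : 'I_N -> set T) : (forall k, measurable (B k)) ->
  P (sample @^-1` cylinder B) = \big[*%E/1%E]_(k < N) P (Z k @^-1` B k).
Proof.
move=> mB.
(* [Zindep] is stated for families indexed by [nat]: extend [B] by [setT]. *)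
pose B' i := if (insub i : option 'I_N) is Some k then B k else setT.
have mB' i : measurable (B' i) by rewrite /B'; case: insub.
have -> : sample @^-1` cylinder B = \bigcap_(i in [set i | (i < N)%N]) (Z i @^-1` B' i).
  apply/seteqP; split => w /= H.
    by move=> i iN; rewrite /B' insubT /=; have := H (Ordinal iN); rewrite tnth_mktuple.
  by move=> k; have := H k (ltn_ord k); rewrite /B' valK tnth_mktuple.
by rewrite (Zindep mB'); apply: eq_bigr => k _; rewrite /B' valK.
Qed.

Lemma distribution_sample_perm (s : {perm 'I_N}) (A : set (N.-tuple T)) : measurable A ->
  distribution P (tuple_perm s \o sample) A = distribution P sample A.
Proof.
apply: (measure_unique _ (fun=> setT) (tuple_measurable_cylinders N)).
- exact: cylinders_setI_closed.
- by move=> _; exists (fun=> setT) => //; apply/seteqP.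
- by apply/seteqP; split => // t _; exists 0%N.
- move=> _ [B mB <-].
  change (P (sample @^-1` (tuple_perm s @^-1` cylinder B)) = P (sample @^-1` cylinder B)).
  rewrite tuple_perm_cylinder !sample_cylinder //; last by move=> k; exact: mB.
  rewrite [LHS](reindex_inj (@perm_inj _ s)); apply: eq_bigr => k _ /=.
  by rewrite permK; apply: Zident; rewrite ?ltn_ord //; exact: mB.
- by move=> _; change (P setT < +oo)%E; rewrite probability_setT ltry.
Qed.

Lemma ge0_integral_sample_perm (s : {perm 'I_N}) (phi : N.-tuple T -> \bar R) :
  measurable_fun [set: N.-tuple T] phi -> (forall t, (0 <= phi t)%E) ->
  (\int[P]_w phi (tuple_perm s (sample w)) = \int[P]_w phi (sample w))%E.
Proof.
move=> mphi phi0.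
rewrite -[LHS](ge0_integral_distribution (tuple_perm s \o sample)) //.
rewrite -[RHS](ge0_integral_distribution sample) //.
by apply: eq_measure_integral => A mA _; exact: distribution_sample_perm.
Qed.

End exchangeable_sample.

Lemma inv_le_of_ratio_le {R : realFieldType} (a b c e alpha : R) :
  0 < a -> 0 < b -> 0 < c -> 0 < e ->
  (c^-1 * a) / (e^-1 * b) <= alpha -> b^-1 <= alpha * c / e * a^-1.
Proof.
move=> a0 b0 c0 e0; rewrite -subr_ge0.
have -> : alpha - c^-1 * a / (e^-1 * b) = (alpha * c * b - a * e) / (c * b).
  by field; rewrite !gt_eqF.
rewrite pmulr_lge0 ?invr_gt0 ?mulr_gt0 // subr_ge0 => H.
rewrite -subr_ge0.
have -> : alpha * c / e * a^-1 - b^-1 = (alpha * c * b - a * e) / (e * a * b).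
  by field; rewrite !gt_eqF.
by rewrite divr_ge0 ?subr_ge0 // ltW // !mulr_gt0.
Qed.

Section conformal_sample.
Context {R : realType} {X Y : Type} (f : \bar R -> X -> Y -> bool)
  (g : \bar R -> X -> bool) (n m : nat) (alpha : R).
Local Notation N := (n + m)%N.
Implicit Types (z : 'I_N -> X * Y) (mu : \bar R) (r : R) (i : 'I_n) (j : 'I_m) (k : 'I_N).

Definition f_at mu z k : R := (f mu (z k).1 (z k).2)%:R.
Definition g_at mu z k : R := (g mu (z k).1)%:R.

Definition cal_count mu z := \sum_(i < n) f_at mu z (lshift m i).
Definition test_count mu z := \sum_(j < m) g_at mu z (rshift n j).

Definition ratio z r : R :=
  ((n.+1%:R)^-1 * (cal_count r%:E z + 1)) / ((m%:R)^-1 * Num.max 1 (test_count r%:E z)).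
Definition mu_hat z := threshold (fun r => ratio z r <= alpha).
Definition fdp mu z : R :=
  (\sum_(j < m) f_at mu z (rshift n j)) / Num.max 1 (test_count mu z).

(* Test point [j] moved into the calibration set, its [g] being counted as 1. *)
Definition cal_count_with j mu z := cal_count mu z + f_at mu z (rshift n j).
Definition test_count_with j mu z := \sum_(j' < m | j' != j) g_at mu z (rshift n j') + 1.
Definition ratio_with j z r : R :=
  ((n.+1%:R)^-1 * cal_count_with j r%:E z) / ((m%:R)^-1 * test_count_with j r%:E z).
Definition mu_with j z := threshold (fun r => ratio_with j z r <= alpha).
Definition weight_with j k z := f_at (mu_with j z) z k / cal_count_with j (mu_with j z) z.

Lemma f_at_ge0 mu z k : 0 <= f_at mu z k. Proof. exact: ler0n. Qed.

Lemma fdp_ge0 mu z : 0 <= fdp mu z.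
Proof.
rewrite /fdp divr_ge0 //; first by rewrite sumr_ge0 // => j _; exact: f_at_ge0.
by rewrite (le_trans ler01) // le_max lexx.
Qed.

Lemma cal_count_with_ge0 j mu z : 0 <= cal_count_with j mu z.
Proof. by rewrite addr_ge0 ?sumr_ge0 // => i _; exact: f_at_ge0. Qed.

Lemma test_count_with_ge1 j mu z : 1 <= test_count_with j mu z.
Proof. by rewrite lerDr sumr_ge0 // => i _; exact: ler0n. Qed.

Lemma weight_with_ge0 j k z : 0 <= weight_with j k z.
Proof. by rewrite divr_ge0 ?f_at_ge0 ?cal_count_with_ge0. Qed.

Section congruence.
Variables (mu mu' : \bar R) (z z' : 'I_N -> X * Y).
Hypotheses (Ef : forall k, f mu (z k).1 (z k).2 = f mu' (z' k).1 (z' k).2)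
  (Eg : forall k, g mu (z k).1 = g mu' (z' k).1).

Lemma cal_count_congr : cal_count mu z = cal_count mu' z'.
Proof. by apply: eq_bigr => i _; rewrite /f_at Ef. Qed.

Lemma test_count_congr : test_count mu z = test_count mu' z'.
Proof. by apply: eq_bigr => j _; rewrite /g_at Eg. Qed.

Lemma cal_count_with_congr j : cal_count_with j mu z = cal_count_with j mu' z'.
Proof. by rewrite /cal_count_with cal_count_congr /f_at Ef. Qed.

Lemma test_count_with_congr j : test_count_with j mu z = test_count_with j mu' z'.
Proof.
rewrite /test_count_with (eq_bigr (fun j' => g_at mu' z' (rshift n j'))) // => j' _.
by rewrite /g_at Eg.
Qed.

End congruence.

Lemma ratio_congr z z' r r' :
  (forall k, f r%:E (z k).1 (z k).2 = f r'%:E (z' k).1 (z' k).2) ->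
  (forall k, g r%:E (z k).1 = g r'%:E (z' k).1) -> ratio z r = ratio z' r'.
Proof. by move=> Ef Eg; rewrite /ratio (cal_count_congr Ef) (test_count_congr Eg). Qed.

Lemma ratio_with_congr j z z' r r' :
  (forall k, f r%:E (z k).1 (z k).2 = f r'%:E (z' k).1 (z' k).2) ->
  (forall k, g r%:E (z k).1 = g r'%:E (z' k).1) -> ratio_with j z r = ratio_with j z' r'.
Proof.
by move=> Ef Eg; rewrite /ratio_with (cal_count_with_congr Ef j) (test_count_with_congr Eg j).
Qed.

Lemma weights_with_sum_le1 j z :
  \sum_(i < n) weight_with j (lshift m i) z + weight_with j (rshift n j) z <= 1.
Proof.
rewrite /weight_with -mulr_suml -mulrDl -/(cal_count _ _) -/(cal_count_with _ _ _).
by have [->|S0] := eqVneq (cal_count_with j (mu_with j z) z) 0; rewrite ?mul0r ?divff.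
Qed.

Section swap.
Variables (i : 'I_n) (j : 'I_m).
Local Notation s := (tperm (lshift m i) (rshift n j)).

Lemma cal_count_with_tperm mu z : cal_count_with j mu (z \o s) = cal_count_with j mu z.
Proof.
rewrite /cal_count_with /cal_count (bigD1 i) //= [in RHS](bigD1 i) //=.
rewrite (eq_bigr (fun i' => f_at mu z (lshift m i'))) => [|i' ne].
  by rewrite /f_at /comp tpermL tpermR; ring.
by rewrite /f_at /comp tpermD // !eq_shift // eq_sym.
Qed.

Lemma test_count_with_tperm mu z : test_count_with j mu (z \o s) = test_count_with j mu z.
Proof.
rewrite /test_count_with (eq_bigr (fun j' => g_at mu z (rshift n j'))) // => j' ne.
by rewrite /g_at /comp tpermD // !eq_shift // eq_sym.
Qed.

Lemma mu_with_tperm z : mu_with j (z \o s) = mu_with j z.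
Proof.
rewrite /mu_with /ratio_with; congr threshold; apply/funext => r.
by rewrite cal_count_with_tperm test_count_with_tperm.
Qed.

Lemma weight_with_tperm z :
  weight_with j (rshift n j) (z \o s) = weight_with j (lshift m i) z.
Proof. by rewrite /weight_with mu_with_tperm cal_count_with_tperm /f_at /= tpermR. Qed.

End swap.

Hypotheses (alpha0 : 0 <= alpha)
  (f_antitone : forall x y (mu mu' : R), 0 <= mu -> mu <= mu' -> f mu'%:E x y -> f mu%:E x y)
  (f_le_g : forall x y (mu : R), 0 <= mu -> f mu%:E x y -> g mu%:E x)
  (f_right_cont : forall x y (mu : R), 0 <= mu ->
     (fun t : R => (f t%:E x y)%:R : R) @ mu^'+ --> ((f mu%:E x y)%:R : R))
  (g_right_cont : forall x (mu : R), 0 <= mu ->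
     (fun t : R => (g t%:E x)%:R : R) @ mu^'+ --> ((g mu%:E x)%:R : R))
  (f_oo : forall x y, f +oo%E x y = false).

Lemma sample_right_const z s : 0 <= s -> \forall u \near s^'+, forall k,
  f u%:E (z k).1 (z k).2 = f s%:E (z k).1 (z k).2 /\ g u%:E (z k).1 = g s%:E (z k).1.
Proof.
move=> s0; apply: filter_forall => k.
have Ef := cvg_nat_near_eq (@f_right_cont (z k).1 (z k).2 s s0).
have Eg := cvg_nat_near_eq (@g_right_cont (z k).1 s s0).
by near=> u; split; [exact: (near Ef u) | exact: (near Eg u)].
Unshelve. all: by end_near.
Qed.

Lemma ratio_right_const z s : 0 <= s ->
  \forall u \near s^'+, (ratio z u <= alpha) = (ratio z s <= alpha).
Proof.
move=> /(sample_right_const z); apply: filterS => u E.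
by rewrite (@ratio_congr z z u s) // => k; case: (E k).
Qed.

Lemma ratio_with_right_const j z s : 0 <= s ->
  \forall u \near s^'+, (ratio_with j z u <= alpha) = (ratio_with j z s <= alpha).
Proof.
move=> /(sample_right_const z); apply: filterS => u E.
by rewrite (@ratio_with_congr j z z u s) // => k; case: (E k).
Qed.

Lemma test_count_eq_with j mu z : g mu (z (rshift n j)).1 ->
  test_count mu z = test_count_with j mu z.
Proof. by move=> gj; rewrite /test_count (bigD1 j) //= {1}/g_at gj addrC. Qed.

Lemma ratio_with_eq_ratio j z r : 0 <= r ->
  f r%:E (z (rshift n j)).1 (z (rshift n j)).2 -> ratio_with j z r = ratio z r.
Proof.
move=> r0 fj; rewrite /ratio_with /ratio /cal_count_with /f_at fj.
by rewrite (test_count_eq_with (f_le_g r0 fj)) max_r ?test_count_with_ge1.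
Qed.

Lemma mu_with_eq_mu_hat j z s : mu_hat z = s%:E ->
  f s%:E (z (rshift n j)).1 (z (rshift n j)).2 -> mu_with j z = s%:E.
Proof.
move=> Es fj; have [s0 rs] := threshold_attained (ratio_right_const z) Es.
apply: threshold_least => //; first by rewrite ratio_with_eq_ratio.
move=> u u0 us; rewrite ratio_with_eq_ratio //.
  by apply: (@notP_lt_threshold _ (fun r => ratio z r <= alpha)); rewrite // -/(mu_hat z) Es.
exact: f_antitone u0 (ltW us) fj.
Qed.

Lemma fdp_term_le_weight j z :
  f_at (mu_hat z) z (rshift n j) / Num.max 1 (test_count (mu_hat z) z) <=
  alpha * n.+1%:R / m%:R * weight_with j (rshift n j) z.
Proof.
have m0 : (0 < m)%N := leq_ltn_trans (leq0n j) (ltn_ord j).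
rewrite {1}/f_at; case fj : f; last first.
  by rewrite mul0r mulr_ge0 ?weight_with_ge0 ?divr_ge0 ?mulr_ge0.
case Es : (mu_hat z) fj => [s||] fj; last 2 first.
- by rewrite f_oo in fj.
- by have := threshold_ge0 (fun r => ratio z r <= alpha); rewrite -/(mu_hat z) Es.
have [s0 rs] := threshold_attained (ratio_right_const z) Es.
rewrite -(ratio_with_eq_ratio s0 fj) in rs.
rewrite /weight_with (mu_with_eq_mu_hat Es fj) /f_at fj !div1r.
rewrite (test_count_eq_with (f_le_g s0 fj)) max_r ?test_count_with_ge1 //.
apply: inv_le_of_ratio_le rs; rewrite ?ltr0n //.
- by rewrite ltr_pwDr /f_at ?fj ?ltr01 ?sumr_ge0 // => i _; exact: f_at_ge0.
- by rewrite (lt_le_trans ltr01) ?test_count_with_ge1.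
Qed.

Lemma fdp_le_weights z :
  fdp (mu_hat z) z <= \sum_(j < m) alpha * n.+1%:R / m%:R * weight_with j (rshift n j) z.
Proof. by rewrite /fdp mulr_suml; apply: ler_sum => j _; exact: fdp_term_le_weight. Qed.

End conformal_sample.

Section conformal_measurable.
Context {R : realType} {dX dY : measure_display} {X : measurableType dX}
  {Y : measurableType dY} (f : \bar R -> X -> Y -> bool) (g : \bar R -> X -> bool)
  (n m : nat) (alpha : R).
Local Notation N := (n + m)%N.
Local Notation tuples := (N.-tuple (X * Y)).
Hypotheses
  (mf : forall mu : R, 0 <= mu -> measurable [set p : X * Y | f mu%:E p.1 p.2])
  (mg : forall mu : R, 0 <= mu -> measurable [set x : X | g mu%:E x])
  (f_antitone : forall x y (mu mu' : R), 0 <= mu -> mu <= mu' -> f mu'%:E x y -> f mu%:E x y)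
  (f_le_g : forall x y (mu : R), 0 <= mu -> f mu%:E x y -> g mu%:E x)
  (f_right_cont : forall x y (mu : R), 0 <= mu ->
     (fun t : R => (f t%:E x y)%:R : R) @ mu^'+ --> ((f mu%:E x y)%:R : R))
  (g_right_cont : forall x (mu : R), 0 <= mu ->
     (fun t : R => (g t%:E x)%:R : R) @ mu^'+ --> ((g mu%:E x)%:R : R))
  (f_oo : forall x y, f +oo%E x y = false).

Lemma measurable_f_tnth (r : R) (k : 'I_N) : 0 <= r ->
  measurable [set t : tuples | f r%:E (tnth t k).1 (tnth t k).2].
Proof.
move=> r0; rewrite -[X in measurable X]setTI.
exact: (measurable_tnth k) measurableT _ (mf r0).
Qed.

Lemma measurable_g_tnth (r : R) (k : 'I_N) : 0 <= r ->
  measurable [set t : tuples | g r%:E (tnth t k).1].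
Proof.
move=> r0; rewrite -[X in measurable X]setTI.
exact: (measurableT_comp measurable_fst (measurable_tnth k)) measurableT _ (mg r0).
Qed.

Lemma measurable_ratio_with_le (j : 'I_m) (r : R) : 0 <= r ->
  measurable [set t : tuples | ratio_with f g j (tnth t) r <= alpha].
Proof.
move=> r0; pose b (e : 'I_N + 'I_N) (t : tuples) :=
  match e with inl k => f r%:E (tnth t k).1 (tnth t k).2 | inr k => g r%:E (tnth t k).1 end.
apply: (measurable_preimage_events (b := b)) => [[k|k]|t t' E]; rewrite /b.
- exact: measurable_f_tnth.
- exact: measurable_g_tnth.
by rewrite (@ratio_with_congr _ _ _ f g n m j (tnth t) (tnth t') r r) // => k;
  [exact: (E (inl k)) | exact: (E (inr k))].
Qed.

Lemma measurable_mu_with_lt (j : 'I_m) (q : R) :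
  measurable [set t : tuples | (mu_with f g alpha j (tnth t) < q%:E)%E].
Proof.
apply: measurable_threshold_lt => [t s s0|r r0]; last exact: measurable_ratio_with_le.
exact: ratio_with_right_const.
Qed.

Lemma measurable_f_mu_with (j : 'I_m) (k : 'I_N) :
  measurable [set t : tuples | f (mu_with f g alpha j (tnth t)) (tnth t k).1 (tnth t k).2].
Proof.
apply: (measurable_antitone_switch (b := fun t mu => f mu (tnth t k).1 (tnth t k).2)) => //.
- by move=> t mu mu' mu0 mumu'; exact: f_antitone.
- by move=> t s s0; exact: cvg_nat_near_eq (@f_right_cont _ _ s s0).
- by move=> t; exact: threshold_ge0.
- exact: measurable_mu_with_lt.
- by move=> q q0; exact: measurable_f_tnth.
Qed.

Lemma measurable_weight_with (j : 'I_m) (k : 'I_N) :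
  measurable_fun setT (fun t : tuples => weight_with f g alpha j k (tnth t)).
Proof.
move=> _ A _; rewrite setTI.
apply: (measurable_preimage_events
  (b := fun l t => f (mu_with f g alpha j (tnth t)) (tnth t l).1 (tnth t l).2)).
  by move=> l; exact: measurable_f_mu_with.
by move=> t t' E; rewrite /weight_with (cal_count_with_congr E) /f_at E.
Qed.

Section exchangeable_conformal.
Context {d : measure_display} {Omega : measurableType d} (P : probability Omega R)
  (Z : nat -> Omega -> X * Y).
Hypotheses (mZ : forall i, (i < N)%N -> measurable_fun setT (Z i))
  (Zindep : mutually_independent P N Z) (Zident : identically_distributed P N Z).

Let weight j k w := (weight_with f g alpha j k (tnth (sample N Z w)))%:E.

Let measurable_weight j k : measurable_fun setT (weight j k).
Proof.
apply/measurable_EFinP.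
exact: measurableT_comp (measurable_weight_with j k) (measurable_sample mZ).
Qed.

Let weight_ge0 j k w : (0 <= weight j k w)%E.
Proof. by rewrite lee_fin weight_with_ge0. Qed.

Lemma integral_weight_with_tperm (i : 'I_n) (j : 'I_m) :
  (\int[P]_w weight j (lshift m i) w = \int[P]_w weight j (rshift n j) w)%E.
Proof.
pose phi (t : tuples) := (weight_with f g alpha j (rshift n j) (tnth t))%:E.
have mphi : measurable_fun setT phi.
  by apply/measurable_EFinP; exact: measurable_weight_with.
have phi0 t : (0 <= phi t)%E by rewrite lee_fin weight_with_ge0.
pose s := tperm (lshift m i) (rshift n j).
rewrite -(ge0_integral_sample_perm mZ Zindep Zident s mphi phi0).
by apply: eq_integral => w _; rewrite /phi /weight tnth_tuple_perm weight_with_tperm.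
Qed.

Lemma integral_weight_with_le (j : 'I_m) :
  (\int[P]_w weight j (rshift n j) w <= (n.+1%:R)^-1%:E)%E.
Proof.
rewrite -[(_^-1)%:E]mule1 lee_pdivlMl ?ltr0n //.
have -> : (n.+1%:R%:E * \int[P]_w weight j (rshift n j) w =
    \int[P]_w (\sum_(i < n) weight j (lshift m i) w + weight j (rshift n j) w))%E.
  rewrite ge0_integralD //; last 2 first.
  - by move=> w _; rewrite sume_ge0.
  - by apply: emeasurable_sum => i; exact: measurable_weight.
  rewrite ge0_integral_sum // (eq_bigr _ (fun i _ => integral_weight_with_tperm i j)).
  by rewrite sumr_const card_ord mule_natl -mulrSr.
have weights_le1 : (\int[P]_w (\sum_(i < n) weight j (lshift m i) w + weight j (rshift n j) w)
    <= \int[P]_w cst 1%E w)%E.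
  apply: ge0_le_integral_nonmeasurable => w; first by rewrite adde_ge0 ?sume_ge0.
  by rewrite /weight sumEFin -EFinD lee_fin weights_with_sum_le1.
by rewrite (le_trans weights_le1) // integral_cst // mul1e probability_le1.
Qed.

Lemma integral_fdp_le : (0 < m)%N -> 0 <= alpha ->
  (\int[P]_w (fdp f g (mu_hat f g alpha (tnth (sample N Z w))) (tnth (sample N Z w)))%:E
    <= alpha%:E)%E.
Proof.
move=> m0 alpha0; set c := alpha * n.+1%:R / m%:R.
have c0 : 0 <= c by rewrite divr_ge0 ?mulr_ge0.
apply: (le_trans (ge0_le_integral_nonmeasurable P
  (f2 := fun w => \sum_(j < m) (c%:E * weight j (rshift n j) w)%E) _ _)).
- by move=> w; rewrite lee_fin fdp_ge0.
- move=> w; rewrite sumEFin lee_fin.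
  exact: fdp_le_weights.
rewrite ge0_integral_sum //; last 2 first.
- by move=> j; apply: measurable_funeM; exact: measurable_weight.
- by move=> j w _; rewrite mule_ge0.
rewrite (eq_bigr _ (fun j _ => ge0_integralZl_EFin _ measurableT (fun w _ => weight_ge0 j _ w)
  (measurable_weight j _) c0)).
apply: (@le_trans _ _ (\sum_(j < m) (c%:E * (n.+1%:R)^-1%:E))%E).
  by apply: lee_sum => j _; rewrite lee_wpmul2l ?lee_fin // integral_weight_with_le.
have -> : (c%:E * (n.+1%:R)^-1%:E = (alpha / m%:R)%:E)%E.
  by rewrite -EFinM /c mulrAC mulfK.
by rewrite sumEFin sumr_const card_ord -[_ *+ m]mulr_natr divfK // pnatr_eq0 -lt0n.
Qed.

End exchangeable_conformal.

End conformal_measurable.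

Theorem lemma3 (R : realType) (dX dY d : measure_display)
  (X : measurableType dX) (Y : measurableType dY) (Omega : measurableType d)
  (P : probability Omega R) (alpha : R) (n m : nat)
  (f : \bar R -> X -> Y -> bool) (g : \bar R -> X -> bool)
  (Z : nat -> Omega -> X * Y) :
  0 < alpha < 1 ->
  (0 < m)%N ->
  (* measurability of the indicator functions *)
  (forall mu : R, 0 <= mu -> measurable [set p : X * Y | f mu%:E p.1 p.2]) ->
  (forall mu : R, 0 <= mu -> measurable [set x : X | g mu%:E x]) ->
  (* (1) monotonicity and domination *)
  (forall x y (mu mu' : R), 0 <= mu -> mu <= mu' -> f mu'%:E x y -> f mu%:E x y) ->
  (forall x y (mu : R), 0 <= mu -> f mu%:E x y -> g mu%:E x) ->
  (* (2) right-continuity on [0, oo) *)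
  (forall x y (mu : R), 0 <= mu ->
     (fun t : R => (f t%:E x y)%:R : R) @ mu^'+ --> ((f mu%:E x y)%:R : R)) ->
  (forall x (mu : R), 0 <= mu ->
     (fun t : R => (g t%:E x)%:R : R) @ mu^'+ --> ((g mu%:E x)%:R : R)) ->
  (* (3) values at infinity *)
  (forall x y, f +oo%E x y = false) ->
  (forall x, g +oo%E x = false) ->
  (* (X_i, Y_i), i = 1..n+m, i.i.d. *)
  (forall i, (i < n + m)%N -> measurable_fun setT (Z i)) ->
  mutually_independent P (n + m) Z ->
  identically_distributed P (n + m) Z ->
  (\int[P]_w (fdp_at f g n m Z (mu_alpha f g n m Z alpha w) w)%:E <= alpha%:E)%E.
Proof.
move=> /andP[alpha_gt0 _] m_gt0 mf mg f_antitone f_le_g f_right_cont g_right_cont f_oo _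
  mZ Zindep Zident.
have sampleE w : tnth (sample (n + m) Z w) = fun k => Z k w.
  by apply/funext => k; rewrite tnth_mktuple.
have := integral_fdp_le mf mg f_antitone f_le_g f_right_cont g_right_cont f_oo mZ Zindep Zident
  m_gt0 (ltW alpha_gt0).
by under eq_integral => w _ do rewrite sampleE.
Qed.
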